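(* Let $d=3$ and let $V_n$, $n\in\mathbb{N}$, be defined as follows: writing $z=(z_1,\mathbf z_2)\in\mathbb{R}\times\mathbb{R}^2$, $C_{k,r}=[k,k+\tfrac14]\times D_r$ with $D_r\subset\mathbb{R}^2$ the disc of radius $r$ centred at $0$, $f(r)=\frac{1}{r|\ln r|\ln|\ln r|}$ for $r\in(0,e^{-1})$, and $V_n(z)=f\big(\tfrac{z_1}{25n}\big)\sum_{k=1}^n\mathbf 1_{C_{k,\sqrt{k/(25n)}}}(z)$. Then there exist $n_i\in\mathbb{N}$, $i\in\mathbb{N}$, such that $\|K(V_{n_i},1)\|_\infty\ge4^i$ for every $i\in\mathbb{N}$.
   Context: For $d=3$, $t>0$, $x,y\in\mathbb{R}^3$: $K(t,x,y)=e^{-\frac{|x||y|-\langle x,y\rangle}{2}}|x|^{-1}\mathbf 1_{|x|\le t|y|}$, and $\|K(V,t)\|_\infty=\sup_{x,y\in\mathbb{R}^3}\int_{\mathbb{R}^3}K(t,z-x,y)|V(z)|\,dz$. *)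

(* R^3 is modelled as R * (R * R), i.e. z = (z1, z2)
   with z2 in R^2, equipped with the product Lebesgue measure. *)
From HB Require Import structures.
From mathcomp Require Import all_boot all_order all_algebra.
From mathcomp Require Import all_classical all_reals all_analysis.
Set Implicit Arguments. Unset Strict Implicit. Unset Printing Implicit Defensive.
Import Order.TTheory GRing.Theory Num.Theory.
Local Open Scope ring_scope.

Section Defs.
Variable R : realType.

Definition R3 := (R * (R * R))%type.

Definition lebesgue3 := (@lebesgue_measure R \x (@lebesgue_measure R \x @lebesgue_measure R))%E.

Definition add3 (x y : R3) : R3 := (x.1 + y.1, (x.2.1 + y.2.1, x.2.2 + y.2.2)).
Definition sub3 (x y : R3) : R3 := (x.1 - y.1, (x.2.1 - y.2.1, x.2.2 - y.2.2)).
Definition dot3 (x y : R3) : R := x.1 * y.1 + x.2.1 * y.2.1 + x.2.2 * y.2.2.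
Definition norm3 (x : R3) : R := Num.sqrt (dot3 x x).

Definition Kker (t : R) (x y : R3) : R :=
  expR (- ((norm3 x * norm3 y - dot3 x y) / 2)) * (norm3 x)^-1 *
  (if norm3 x <= t * norm3 y then 1 else 0).

Definition Knorm (V : R3 -> R) (t : R) : \bar R :=
  ereal_sup [set (\int[lebesgue3]_z (Kker t (sub3 z x) y * `|V z|)%:E)%E
            | x in [set: R3] & y in [set: R3]].

(* f(r) = 1/(r |ln r| ln|ln r|) on (0, e^{-1}); set to 0 elsewhere (never
   used there) *)
Definition fpot (r : R) : R :=
  if (0 < r) && (r < expR (-1)) then (r * `|ln r| * ln `|ln r|)^-1 else 0.

Definition Ccyl (k : nat) (r : R) : set R3 :=
  [set z | k%:R <= z.1 <= k%:R + 4^-1 /\ z.2.1 ^+ 2 + z.2.2 ^+ 2 <= r ^+ 2].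

Definition Vn (n : nat) (z : R3) : R :=
  fpot (z.1 / (25 * n%:R)) *
  \sum_(1 <= k < n.+1) \1_(Ccyl k (Num.sqrt (k%:R / (25 * n%:R)))) z.

End Defs.

(* It suffices to test the supremum at the single pair x = 0, y = (n + 1, 0, 0).
   Inside each cylinder C_k (1 <= k <= n) we place the box
   B_k = [k, k + 1/4] x [-a_k, a_k]^2 with a_k^2 = k / (50 n).  On B_k the
   point z makes a small angle with y, so K(1, z, y) >= 1 / (2 (k + 1)), and
   V_n(z) >= f(z_1 / (25 n)) >= 1 / ((2k / 25n) L_k ln L_k) with
   L_k = ln (25 n / k).  Since the boxes are disjoint and |B_k| = k / (50 n),
   the integral is at least sum_(k <= n) 1 / (8 (k + 1) L_k ln L_k), and this
   sum dominates, by telescoping, (ln ln ln (25 n) - 25) / 24.  Choosing n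
   huge in terms of 4^i gives the claim. *)

From HB Require Import structures.
From mathcomp Require Import all_boot all_order all_algebra.
From mathcomp Require Import all_classical all_reals all_analysis.
From mathcomp Require Import measurable_realfun ring lra.
Import Order.TTheory GRing.Theory Num.Theory.
Local Open Scope ring_scope.

Section exp_ln_facts.
Variable R : realType.

(* e <= 4, obtained from e^(-1/2) >= 1 - 1/2. *)
Lemma expR1_le4 : expR 1 <= 4 :> R.
Proof.
have half_le : 1 / 2 <= expR (- (1 / 2)) :> R by apply: le_trans (expR_ge1Dx _); lra.
have inv : expR (1 / 2) * expR (- (1 / 2)) = 1 :> R by rewrite -expRD subrr expR0.
have sq : expR 1 = expR (1 / 2) * expR (1 / 2) :> R.
  by rewrite -expRD; congr expR; field.
have := expR_gt0 (1 / 2 : R); rewrite sq; nra.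
Qed.

Lemma expRN1_ge : 4^-1 <= expR (-1) :> R.
Proof. by rewrite expRN lef_pV2 ?posrE ?expR_gt0// expR1_le4. Qed.

(* ln (x / y) <= x / y - 1: the chord slope of ln is at most 1/y. *)
Lemma ln_sub_le (x y : R) : 0 < x -> 0 < y -> (ln x - ln y) * y <= x - y.
Proof.
move=> x0 y0; rewrite -ler_pdivlMr// -ln_div ?posrE//.
have xy : x / y = 1 + (x - y) / y by field; rewrite gt_eqF.
rewrite xy; apply: le_ln1Dx.
have : 0 < x / y by exact: divr_gt0.
rewrite xy; lra.
Qed.

Lemma ln25_gt1 : 1 < ln (25 : R).
Proof.
rewrite -[X in X < _](expRK 1) ltr_ln ?posrE ?expR_gt0//.
have := expR1_le4; lra.
Qed.

End exp_ln_facts.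
Arguments ln_sub_le {R x y}.

(* The divergent series sum_k 1/((k+1) L_k ln L_k), with L_k = ln (25 N / k),
   compared by telescoping with the triple logarithm phi k = ln ln L_k. *)
Section triple_log_series.
Context {R : realType} {N : R}.

Definition Llog (k : nat) : R := ln (25 * N / k%:R).
Definition phi (k : nat) : R := ln (ln (Llog k)).
Definition bterm (k : nat) : R := (8 * (k%:R + 1) * Llog k * ln (Llog k))^-1.

Lemma Llog_gt1 {k} : (1 <= k)%N -> k%:R <= N -> 1 < Llog k.
Proof.
move=> k1 kN; apply: lt_le_trans (ln25_gt1 R) _.
have k0 : 0 < k%:R :> R by rewrite ltr0n.
rewrite /Llog ler_ln ?posrE ?divr_gt0//; last lra.
by rewrite ler_pdivlMr//; nra.
Qed.

Lemma lnLlog_gt0 {k} : (1 <= k)%N -> k%:R <= N -> 0 < ln (Llog k).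
Proof. by move=> k1 kN; apply/ln_gt0/Llog_gt1. Qed.

Lemma bterm_gt0 {k} : (1 <= k)%N -> k%:R <= N -> 0 < bterm k.
Proof.
move=> k1 kN; have := Llog_gt1 k1 kN; have := lnLlog_gt0 k1 kN.
have k0 : 0 <= k%:R :> R by [].
move=> lnL_gt0 L_gt1; rewrite /bterm invr_gt0.
by apply: mulr_gt0 => //; apply: mulr_gt0; [apply: mulr_gt0|]; lra.
Qed.

(* L_k - L_(k+1) = ln (1 + 1/k) <= 1/k. *)
Lemma Llog_succ_le {k} : (1 <= k)%N -> k%:R <= N -> (Llog k - Llog k.+1) * k%:R <= 1.
Proof.
move=> k1 kN; have k0 : 1 <= k%:R :> R by rewrite ler1n.
have kS0 : 0 < k.+1%:R :> R by rewrite ltr0n.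
set A := 25 * N / k.+1%:R.
have A0 : 0 < A by rewrite divr_gt0//; lra.
have Ak : 25 * N / k%:R = A + A / k%:R by rewrite /A mulrS; field; lra.
have Ak0 : 0 < 25 * N / k%:R by rewrite divr_gt0//; lra.
have := ln_sub_le Ak0 A0; rewrite {2}Ak addrAC subrr add0r => h.
rewrite -(ler_pM2r A0) mul1r.
have -> : (Llog k - Llog k.+1) * k%:R * A = (Llog k - Llog k.+1) * A * k%:R by ring.
apply: le_trans (ler_wpM2r _ h) _; first lra.
by rewrite divfK // gt_eqF //; lra.
Qed.

(* Applying [ln_sub_le] to ln L_k vs ln L_(k+1) and to L_k vs L_(k+1):
   phi k - phi (k+1) <= (L_k - L_(k+1)) / (L_(k+1) ln L_(k+1))
                     <= 1 / (k L_(k+1) ln L_(k+1)) <= 24 bterm (k+1). *)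
Lemma phi_step {k} : (1 <= k)%N -> k.+1%:R <= N ->
  phi k - phi k.+1 <= 24 * bterm k.+1.
Proof.
move=> k1 kN.
have k0 : 1 <= k%:R :> R by rewrite ler1n.
have kN' : k%:R <= N by apply: le_trans kN; rewrite ler_nat.
have L1 := Llog_gt1 (leqW k1) kN; have lnL0 := lnLlog_gt0 (leqW k1) kN.
have L1' := Llog_gt1 k1 kN'; have lnL0' := lnLlog_gt0 k1 kN'.
have step_L := Llog_succ_le k1 kN'.
set P := Llog k.+1 in L1 lnL0 step_L *; set Q := ln P in lnL0 *.
have step_lnln := ln_sub_le lnL0' lnL0.
have step_ln := ln_sub_le (lt_trans ltr01 L1') (lt_trans ltr01 L1).
rewrite /bterm /phi -/P -/Q -[k.+1%:R]natr1.
set u := ln (ln (Llog k)) - ln Q in step_lnln *.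
set v := ln (Llog k) - Q in step_lnln step_ln *.
set X := Llog k - P in step_ln step_L *.
have D0 : 0 < 8 * (k%:R + 1 + 1) * P * Q.
  by apply: mulr_gt0 => //; apply: mulr_gt0; lra.
rewrite ler_pdivlMr //.
have a1 : u * Q * P <= v * P by rewrite ler_pM2r //; lra.
have a2 : u * Q * P * (k%:R + 1 + 1) <= X * (k%:R + 1 + 1).
  by rewrite ler_pM2r//; lra.
have a3 : X * (k%:R + 1 + 1) <= 3 by nra.
have -> : u * (8 * (k%:R + 1 + 1) * P * Q) = 8 * (u * Q * P * (k%:R + 1 + 1)).
  by ring.
lra.
Qed.

Lemma phi_telescope {n} : (1 <= n)%N -> n%:R <= N ->
  phi 1 - phi n <= 24 * \sum_(2 <= k < n.+1) bterm k.
Proof.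
elim: n => [//|[|n] IH] _ nN; first by rewrite big_geq // subrr mulr0.
have nN' : n.+1%:R <= N by apply: le_trans nN; rewrite ler_nat.
rewrite big_nat_recr //= mulrDr.
have := IH isT nN'; have := phi_step (isT : (1 <= n.+1)%N) nN; lra.
Qed.

End triple_log_series.
Arguments Llog {R} N. Arguments phi {R} N. Arguments bterm {R} N.

Section step_function_bound.
Local Open Scope ereal_scope.
Context d (T : measurableType d) (R : realType).
Variable mu : {measure set T -> \bar R}.

(* For nonnegative functions the integral is monotone without any
   measurability assumption: both sides are suprema over the simple functions
   lying below the integrand. *)
Lemma ge0_le_integral_nonmeas (f g : T -> \bar R) :
  (forall x, 0 <= f x) -> (forall x, f x <= g x) ->
  \int[mu]_x f x <= \int[mu]_x g x.
Proof.
move=> f0 fg; have g0 x : 0 <= g x by exact: le_trans (fg x).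
rewrite !ge0_integralTE//; apply: ereal_sup_le => _ [h hf <-].
by exists h => // x; exact: le_trans (hf x) (fg x).
Qed.

Lemma step_function_le_integral (I : eqType) (s : seq I) (c : I -> R)
    (A : I -> set T) (g : T -> \bar R) :
  {in s, forall i, (0 <= c i)%R} -> (forall i, measurable (A i)) ->
  (forall x, (\sum_(i <- s) c i * \1_(A i) x)%:E <= g x) ->
  \sum_(i <- s) (c i)%:E * mu (A i) <= \int[mu]_x g x.
Proof.
move=> c0 mA below.
pose c' i := Num.max (c i) 0%R.
have c'0 i : (0 <= c' i)%R by rewrite le_max lexx orbT.
have c'E : {in s, c' =1 c} by move=> i /c0 ci0; rewrite /c' max_l.
have meas_step i : measurable_fun setT (fun x => (c' i * \1_(A i) x)%:E).
  by apply/measurable_EFinP/measurable_funM => //; exact: measurable_indic.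
have int_step i : \int[mu]_x (c' i * \1_(A i) x)%:E = (c' i)%:E * mu (A i).
  under eq_integral do rewrite EFinM.
  rewrite ge0_integralZl ?lee_fin//; last by apply/measurable_EFinP/measurable_indic.
  by rewrite integral_indic// setIT.
have step0 i x : 0 <= (c' i * \1_(A i) x)%:E by rewrite lee_fin mulr_ge0.
have -> : \sum_(i <- s) (c i)%:E * mu (A i) = \sum_(i <- s) (c' i)%:E * mu (A i).
  by apply: eq_big_seq => i /c'E ->.
rewrite -(eq_bigr _ (fun i _ => int_step i)) -ge0_integral_sum//.
apply: ge0_le_integral_nonmeas => [x|x]; first exact: sume_ge0.
by rewrite sumEFin; under eq_big_seq => i si do rewrite c'E//; exact: below.
Qed.

End step_function_bound.

(* The library does not export a sigma-finiteness instance for a product of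
   sigma-finite measures; we provide it for the planar Lebesgue measure, the
   second factor of [lebesgue3], so that [product_measure1E] applies to it. *)
Section lebesgue2.
Local Open Scope ereal_scope.
Variable R : realType.

Definition lebesgue2 := (@lebesgue_measure R \x @lebesgue_measure R).
HB.instance Definition _ := Measure.on lebesgue2.

Lemma lebesgue2_rect (A B : set R) : measurable A -> measurable B ->
  lebesgue2 (A `*` B)%classic = lebesgue_measure A * lebesgue_measure B.
Proof. by move=> mA mB; rewrite /lebesgue2 product_measure1E. Qed.

Lemma lebesgue2_sigma_finite : sigma_finite setT lebesgue2.
Proof.
have /sigma_finiteP[F [TF ndF Foo]] := sigma_finiteT (@lebesgue_measure R).
exists (fun n => (F n `*` F n)%classic).
  rewrite -setXTT TF predeqE => -[x y]; split.
    move=> [/= [n _ Fnx] [k _ Gky]]; exists (maxn n k) => //; split.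
    - by move: x Fnx; exact/subsetPset/ndF/leq_maxl.
    - by move: y Gky; exact/subsetPset/ndF/leq_maxr.
  by move=> [n _ []/= ? ?]; split; exists n.
move=> k; have [? ?] := Foo k.
split; first exact: measurableX.
by rewrite lebesgue2_rect// lte_mul_pinfty// ge0_fin_numE.
Qed.

HB.instance Definition _ :=
  Measure_isSigmaFinite.Build _ _ _ lebesgue2 lebesgue2_sigma_finite.

End lebesgue2.

Section box_lower_bounds.
Variables (R : realType) (n : nat).
Hypothesis n_ge1 : (1 <= n)%N.
Let N : R := n%:R.
Let N_ge1 : 1 <= N. Proof. by rewrite /N ler1n. Qed.

Definition origin : R3 R := (0, (0, 0)).
Definition far_point : R3 R := (N + 1, (0, 0)).

Definition half_width (k : nat) : R := Num.sqrt (k%:R / (50 * N)).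
Definition box_side (k : nat) : set R := `[- half_width k, half_width k]%classic.
Definition box_axis (k : nat) : set R := `[k%:R, k%:R + 4^-1]%classic.
Definition box (k : nat) : set (R3 R) := (box_axis k `*` (box_side k `*` box_side k))%classic.

Definition kernel_lb (k : nat) : R := (2 * (k%:R + 1))^-1.
Definition potential_lb (k : nat) : R :=
  (2 * k%:R / (25 * N) * Llog N k * ln (Llog N k))^-1.

Lemma box_bounds_gt0 {k} : (1 <= k)%N -> (k <= n)%N ->
  0 < kernel_lb k /\ 0 < potential_lb k.
Proof.
move=> k1 kn; have k0 : 1 <= k%:R :> R by rewrite ler1n.
have kN : k%:R <= N by rewrite /N ler_nat.
have := Llog_gt1 k1 kN; have := lnLlog_gt0 k1 kN => ? ?.
have N1 := N_ge1; split; rewrite invr_gt0; first lra.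
apply: mulr_gt0; last lra.
by apply: mulr_gt0; [rewrite divr_gt0//; lra | lra].
Qed.

Lemma half_width_sqr k : half_width k ^+ 2 = k%:R / (50 * N).
Proof. by rewrite sqr_sqrtr// divr_ge0// mulr_ge0//; lra. Qed.

Lemma box_measurable k : measurable (box k).
Proof. by apply: measurableX; [|apply: measurableX]; exact: measurable_itv. Qed.

Lemma box_volume {k} : (1 <= k)%N -> @lebesgue3 R (box k) = (k%:R / (50 * N))%:E.
Proof.
move=> k1; have k0 : 1 <= k%:R :> R by rewrite ler1n.
have N1 := N_ge1.
have a0 : 0 < half_width k by rewrite /half_width sqrtr_gt0 divr_gt0//; lra.
change (@lebesgue3 R) with (@lebesgue_measure R \x lebesgue2 R)%E.
rewrite /box product_measure1E; last 2 first.
- exact: measurable_itv.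
- by apply: measurableX; exact: measurable_itv.
transitivity (lebesgue_measure (box_axis k) *
  (lebesgue_measure (box_side k) * lebesgue_measure (box_side k)))%E.
  by congr (_ * _)%E; apply: lebesgue2_rect; exact: measurable_itv.
rewrite /box_axis /box_side !lebesgue_measure_itv /= !lte_fin.
rewrite ifT; last lra.
rewrite ifT; last lra.
rewrite -!EFinD -!EFinM; congr EFin.
by rewrite -half_width_sqr expr2; field.
Qed.

Lemma box_disjoint {j k z} : box j z -> box k z -> j = k.
Proof.
case: z => z1 z2 [/= + _] [/= + _]; rewrite /box_axis /= !in_itv /=.
move=> /andP[j_le le_j] /andP[k_le le_k].
apply/eqP; rewrite eqn_leq; apply/andP; split; rewrite leqNgt; apply/negP => lt.
- have : k.+1%:R <= j%:R :> R by rewrite ler_nat.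
  rewrite -natr1; lra.
- have : j.+1%:R <= k%:R :> R by rewrite ler_nat.
  rewrite -natr1; lra.
Qed.

(* On B_k the point z has |z| <= k + 1 <= |y| and makes a small angle with y:
   |z||y| - <z,y> <= 1/25, so the exponential factor is at least 1/2. *)
Lemma kernel_on_box {k z} : (1 <= k)%N -> (k <= n)%N -> box k z ->
  kernel_lb k <= Kker 1 (sub3 z origin) far_point.
Proof.
move=> k1 kn; case: z => z1 [z2 z3] [/= + [/= + +]].
rewrite /box_axis /box_side /= !in_itv /= => /andP[a1 b1] /andP[a2 b2] /andP[a3 b3].
have k0 : 1 <= k%:R :> R by rewrite ler1n.
have kN : k%:R <= N by rewrite /N ler_nat.
have N1 := N_ge1.
have a_sqr := half_width_sqr k.
have a0 : 0 <= half_width k by exact: sqrtr_ge0.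
set a := half_width k in a2 b2 a3 b3 a_sqr a0.
have z2_sqr : z2 * z2 <= a ^+ 2 by rewrite expr2; nra.
have z3_sqr : z3 * z3 <= a ^+ 2 by rewrite expr2; nra.
have offset : (z2 * z2 + z3 * z3) * N <= k%:R / 25.
  have -> : k%:R / 25 = 2 * (k%:R / (50 * N)) * N by field; lra.
  by rewrite -a_sqr; apply: ler_wpM2r; lra.
have offset_small : z2 * z2 + z3 * z3 <= 1 / 25.
  have : k%:R / 25 <= N / 25 by lra.
  nra.
rewrite /Kker /sub3 /origin /= !subr0.
set q := z1 * z1 + z2 * z2 + z3 * z3.
have q0 : 0 <= q by rewrite /q; nra.
have -> : norm3 (z1, (z2, z3)) = Num.sqrt q by [].
have -> : norm3 far_point = N + 1.
  rewrite /norm3 /dot3 /far_point /= !mulr0 !addr0 -expr2 sqrtr_sqr gtr0_norm//; lra.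
have -> : dot3 (z1, (z2, z3)) far_point = z1 * (N + 1).
  by rewrite /dot3 /far_point /= !mulr0 !addr0.
set nz := Num.sqrt q.
have nz0 : 0 <= nz by exact: sqrtr_ge0.
have nz_sqr : nz * nz = q by rewrite -expr2 sqr_sqrtr.
have nz_le : nz <= k%:R + 1 by rewrite /q in nz_sqr; nra.
have z1_le : z1 <= nz by rewrite /q in nz_sqr; nra.
have angle : (nz - z1) * (50 * N) <= 1.
  have : (nz - z1) * (nz + z1) = z2 * z2 + z3 * z3 by rewrite /q in nz_sqr; nra.
  nra.
have expo_ge : 1 / 2 <= expR (- ((nz * (N + 1) - z1 * (N + 1)) / 2)).
  apply: le_trans (expR_ge1Dx _).
  have : (nz - z1) * (N + 1) <= 1 / 25 by nra.
  lra.
have inv_ge : (k%:R + 1)^-1 <= nz^-1 by rewrite lef_pV2 ?posrE//; lra.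
rewrite mul1r ifT; last lra.
rewrite mulr1 /kernel_lb invfM.
by apply: ler_pM => //; rewrite ?invr_ge0//; lra.
Qed.

(* For z_1 in [k, k + 1/4] the argument u = z_1/(25n) lies in (0, e^-1) with
   1/u <= 25n/k = e^(L_k), so f(u) = 1/(u |ln u| ln |ln u|) is bounded below. *)
Lemma fpot_on_box {k z1} : (1 <= k)%N -> (k <= n)%N ->
  k%:R <= z1 <= k%:R + 4^-1 -> potential_lb k <= fpot (z1 / (25 * N)).
Proof.
move=> k1 kn /andP[z1a z1b].
have k0 : 1 <= k%:R :> R by rewrite ler1n.
have kN : k%:R <= N by rewrite /N ler_nat.
have N1 := N_ge1.
have z10 : 0 < z1 by lra.
set u := z1 / (25 * N).
have u0 : 0 < u by rewrite divr_gt0//; lra.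
have uinv : u^-1 = 25 * N / z1 by rewrite /u invf_div.
have uinv_ge : 20 <= u^-1 by rewrite uinv ler_pdivlMr//; lra.
have uinv_le : u^-1 <= 25 * N / k%:R.
  by rewrite uinv ler_pM2l ?lef_pV2 ?posrE//; lra.
have u_small : u < expR (-1).
  apply: lt_le_trans (expRN1_ge R).
  by rewrite -(invrK u) ltf_pV2 ?posrE ?invr_gt0//; lra.
have lnu : `|ln u| = ln u^-1.
  rewrite lnV ?posrE// ler0_norm//; apply: ln_le0.
  have : expR (-1) <= 1 :> R by rewrite -[X in _ <= X]expR0 ler_expR; lra.
  lra.
have lnu_gt1 : 1 < ln u^-1.
  rewrite -[X in X < _](expRK 1) ltr_ln ?posrE ?expR_gt0 ?invr_gt0//.
  have := expR1_le4 R; lra.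
have lnu_le : ln u^-1 <= Llog N k.
  by rewrite /Llog ler_ln ?posrE ?invr_gt0// divr_gt0//; lra.
have lnlnu_gt0 : 0 < ln (ln u^-1) := ln_gt0 lnu_gt1.
have lnlnu_le : ln (ln u^-1) <= ln (Llog N k) by rewrite ler_ln ?posrE//; lra.
have u_le : u <= 2 * k%:R / (25 * N) by rewrite /u ler_pM2r ?invr_gt0//; lra.
rewrite /fpot ifT; last by apply/andP; split.
rewrite lnu /potential_lb lef_pV2 ?posrE; first last.
- by apply: mulr_gt0 => //; apply: mulr_gt0 => //; lra.
- by rewrite -invr_gt0; exact: (box_bounds_gt0 k1 kn).2.
apply: ler_pM; [apply: mulr_ge0; lra | lra | | exact: lnlnu_le].
by apply: ler_pM; lra.
Qed.

(* B_k lies in the cylinder C_k (the disc radius satisfies r_k^2 = 2 a_k^2),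
   so V_n(z) >= f(z_1/(25n)) there. *)
Lemma Vn_on_box {k z} : (1 <= k)%N -> (k <= n)%N -> box k z ->
  fpot (z.1 / (25 * N)) <= `|Vn n z|.
Proof.
move=> k1 kn; case: z => z1 [z2 z3] [/= + [/= + +]].
rewrite /box_axis /box_side /= !in_itv /= => z1k /andP[a2 b2] /andP[a3 b3].
have N1 := N_ge1.
have fpot_ge0 : 0 <= fpot (z1 / (25 * N)).
  exact: le_trans (ltW (box_bounds_gt0 k1 kn).2) (fpot_on_box k1 kn z1k).
have in_cyl : 1 <= \sum_(1 <= j < n.+1)
    \1_(Ccyl j (Num.sqrt (j%:R / (25 * n%:R)))) (z1, (z2, z3)) :> R.
  rewrite (bigD1_seq k) /= ?iota_uniq ?mem_index_iota ?k1 ?ltnS//.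
  rewrite indicE mem_set; last first.
    split; first by [].
    rewrite sqr_sqrtr /=; last by rewrite divr_ge0// mulr_ge0//; lra.
    have := half_width_sqr k; rewrite -/N.
    set a := half_width k in a2 b2 a3 b3 *; move=> a_sqr.
    have -> : k%:R / (25 * N) = 2 * (k%:R / (50 * N)) by field; lra.
    rewrite -a_sqr !expr2; nra.
  rewrite -[X in X <= _]addr0 lerD2l; apply: sumr_ge0 => j _.
  by rewrite indicE; case: (_ \in _).
rewrite /Vn /= ger0_norm; last by apply: mulr_ge0; lra.
by rewrite -[X in X <= _]mulr1; apply: ler_wpM2l.
Qed.

Definition integrand (z : R3 R) : R := Kker 1 (sub3 z origin) far_point * `|Vn n z|.

Lemma integrand_on_box {k z} : (1 <= k)%N -> (k <= n)%N -> box k z ->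
  kernel_lb k * potential_lb k <= integrand z.
Proof.
move=> k1 kn Bz; have [c0 f0] := box_bounds_gt0 k1 kn.
apply: ler_pM; [exact: ltW | exact: ltW | exact: kernel_on_box |].
apply: le_trans (Vn_on_box k1 kn Bz).
by case: z Bz => z1 z' [/= z1k _]; apply: fpot_on_box; rewrite /box_axis /= in_itv in z1k.
Qed.

Lemma box_contribution {k} : (1 <= k)%N -> (k <= n)%N ->
  kernel_lb k * potential_lb k * (k%:R / (50 * N)) = bterm N k.
Proof.
move=> k1 kn; have k0 : 1 <= k%:R :> R by rewrite ler1n.
have kN : k%:R <= N by rewrite /N ler_nat.
have := Llog_gt1 k1 kN; have := lnLlog_gt0 k1 kN => ? ?.
have N1 := N_ge1.
rewrite /kernel_lb /potential_lb /bterm; field.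
by rewrite !gt_eqF//; lra.
Qed.

(* The boxes are disjoint, so the step function sum_k c_k 1_(B_k) is below the
   integrand: at each point at most one term is nonzero. *)
Lemma step_below_integrand z :
  \sum_(1 <= k < n.+1) kernel_lb k * potential_lb k * \1_(box k) z <= integrand z.
Proof.
have integrand_ge0 : 0 <= integrand z.
  rewrite /integrand /Kker; apply: mulr_ge0 => //; apply: mulr_ge0.
    by apply: mulr_ge0; [exact: ltW (expR_gt0 _) | rewrite invr_ge0 sqrtr_ge0].
  by case: ifP.
have [[k /andP[k1 kn] Bz]|nobox] :=
  pselect (exists2 k, (1 <= k <= n)%N & box k z).
- rewrite (bigD1_seq k) /= ?iota_uniq ?mem_index_iota ?k1 ?ltnS//.
  rewrite big1_seq ?addr0 => [|j /andP[jk _]]; last first.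
    by rewrite indicE memNset ?mulr0// => Bj; move: jk; rewrite (box_disjoint Bj Bz) eqxx.
  by rewrite indicE mem_set// mulr1; exact: integrand_on_box.
- rewrite big1_seq// => j; rewrite mem_index_iota => /andP[j1 jn].
  by rewrite indicE memNset ?mulr0// => Bj; apply: nobox; exists j; rewrite ?j1.
Qed.

Lemma integral_ge_bterm_sum :
  ((\sum_(1 <= k < n.+1) bterm N k)%:E <= \int[@lebesgue3 R]_z (integrand z)%:E)%E.
Proof.
have -> : (\sum_(1 <= k < n.+1) bterm N k)%:E =
    (\sum_(1 <= k < n.+1) (kernel_lb k * potential_lb k)%:E * @lebesgue3 R (box k))%E.
  rewrite -sumEFin; apply: eq_big_nat => k /andP[k1 kn].
  by rewrite box_volume// -EFinM box_contribution.
change (@lebesgue3 R) with (@lebesgue_measure R \x lebesgue2 R)%E.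
apply: step_function_le_integral => [k|k|z]; last 2 first.
- exact: box_measurable.
- by rewrite lee_fin; exact: step_below_integrand.
rewrite mem_index_iota => /andP[k1 kn].
by have [c0 f0] := box_bounds_gt0 k1 kn; rewrite mulr_ge0// ltW.
Qed.

End box_lower_bounds.

Lemma bterm_sum_ge {R : realType} {n : nat} {M : R} : (1 <= n)%N ->
  expR (expR (expR M)) <= n%:R -> M - 25 <= 24 * \sum_(1 <= k < n.+1) bterm n%:R k.
Proof.
move=> n1 nM; set N : R := n%:R.
have N1 : 1 <= N by rewrite /N ler1n.
have phi_n_lt : phi N n < 25.
  rewrite /phi /Llog (_ : 25 * N / n%:R = 25); last by rewrite /N; field; lra.
  have ln25 := ln25_gt1 R; have lnln25 := ln_gt0 ln25.
  have := ln_sublinear lnln25; have := ln_sublinear (lt_trans ltr01 ln25).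
  have := @ln_sublinear R 25 ltac:(lra); lra.
have phi_1_ge : M <= phi N 1.
  rewrite /phi /Llog divr1 -[M]expRK.
  have e1 := expR_gt0 M; have e2 := expR_gt0 (expR M).
  have e3 := expR_gt0 (expR (expR M)).
  have h1 : expR (expR M) <= ln (25 * N).
    by rewrite -[X in X <= _]expRK ler_ln ?posrE//; lra.
  have h2 : expR M <= ln (ln (25 * N)).
    by rewrite -[X in X <= _]expRK ler_ln ?posrE//; lra.
  by rewrite ler_ln ?posrE//; lra.
have first_term : 0 <= bterm N 1 by apply/ltW/bterm_gt0.
have := phi_telescope n1 (lexx N).
by rewrite (big_ltn (m := 1))//; lra.
Qed.

Theorem lemma4p3 (R : realType) :
  exists ns : nat -> nat, forall i : nat,
    (((4 : R) ^+ i)%:E <= Knorm (Vn (ns i)) 1)%E.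
Proof.
pose M (i : nat) : R := 24 * 4 ^+ i + 25.
exists (fun i => (Num.truncn (expR (expR (expR (M i))))).+1) => i.
set n := (Num.truncn _).+1.
have n_large : expR (expR (expR (M i))) <= n%:R by exact/ltW/truncnS_gt.
have sum_ge := bterm_sum_ge (isT : (1 <= n)%N) n_large.
apply: (@le_trans _ _ (\sum_(1 <= k < n.+1) bterm n%:R k)%:E).
  by rewrite lee_fin; rewrite /M in sum_ge; lra.
apply: le_trans (@integral_ge_bterm_sum R n isT) _.
apply: ereal_sup_ubound => /=.
by exists (origin R) => //; exists (far_point R n).
Qed.
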